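(* Let $d\ge1$, $n\in\mathbb{N}$, and let $R(n)$ be the range of $n$ steps of simple symmetric random walk on $\mathbb{Z}^d$ started at $0$. Then $$H(R(n))\ge -\log\Big(1-\frac{1}{2d}\Big)\cdot \mathbb{E}\big[|\partial R(n)|-1\big].$$
   Context: $H(X)=\mathbb{E}[-\log p(X)]$ with $p(x)=\Pr[X=x]$, logarithms base $2$. The inner boundary of $A\subset\mathbb{Z}^d$ is $\partial A=\{z\in A : z \text{ is at graph distance } 1 \text{ from some vertex of } \mathbb{Z}^d\setminus A\}$. The range is $R(n)=\{S(0),\ldots,S(n)\}$. *)

From Stdlib Require Import Reals ZArith List.
Import ListNotations.
Open Scope R_scope.

(* Points of Z^d are lists of integers of length d. *)
Definition point := list Z.

Definition origin (d : nat) : point := repeat 0%Z d.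

(* A step is a pair (coordinate i < d, sign): true = +e_i, false = -e_i. *)
Definition step := (nat * bool)%type.

Definition steps (d : nat) : list step := list_prod (seq 0 d) [true; false].

Fixpoint upd (x : point) (i : nat) (delta : Z) : point :=
  match x, i with
  | [], _ => []
  | a :: x', O => (a + delta)%Z :: x'
  | a :: x', S i' => a :: upd x' i' delta
  end.

Definition move (x : point) (s : step) : point :=
  upd x (fst s) (if snd s then 1%Z else (-1)%Z).

(* all step sequences of length n: the (2d)^n equally likely walk paths *)
Fixpoint paths (d n : nat) : list (list step) :=
  match n with
  | O => [[]]
  | S m => flat_map (fun p => map (fun s => s :: p) (steps d)) (paths d m)
  end.

Fixpoint walk_pts (x : point) (p : list step) : list point :=
  match p with
  | [] => [x]
  | s :: p' => x :: walk_pts (move x s) p'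
  end.

(* the range R(n) (as a list, possibly with repetitions) *)
Definition range (d : nat) (p : list step) : list point := walk_pts (origin d) p.

Definition inb (x : point) (l : list point) : bool :=
  existsb (fun y => if list_eq_dec Z.eq_dec x y then true else false) l.

Definition same_set (l1 l2 : list point) : bool :=
  forallb (fun x => inb x l2) l1 && forallb (fun x => inb x l1) l2.

Definition boundary_size (d : nat) (A : list point) : nat :=
  length (filter (fun z => existsb (fun s => negb (inb (move z s) A)) (steps d))
                 (nodup (list_eq_dec Z.eq_dec) A)).

Definition log2 (x : R) : R := ln x / ln 2.

Definition rsum {A : Type} (f : A -> R) (l : list A) : R :=
  fold_right Rplus 0 (map f l).

Definition npaths (d n : nat) : R := INR (length (paths d n)).

Definition prob_range (d n : nat) (p : list step) : R :=
  INR (length (filter (fun q => same_set (range d q) (range d p)) (paths d n)))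
  / npaths d n.

(* H(R(n)) = E[-log2 p(R(n))] *)
Definition range_entropy (d n : nat) : R :=
  rsum (fun p => / npaths d n * (- log2 (prob_range d n p))) (paths d n).

Definition exp_boundary_minus1 (d n : nat) : R :=
  rsum (fun p => / npaths d n * (INR (boundary_size d (range d p)) - 1)) (paths d n).

From Stdlib Require Import Reals ZArith List Lia Lra.
Import ListNotations.
Open Scope bool_scope.
Open Scope R_scope.

(* Fix an n-step path p, let A = R(n) be its range and B the list
   of (distinct) inner boundary points of A; write c = 1 - 1/(2d).  Every path
   with the same range as p stays inside A and visits every point of B.  Each
   time such a path is at a point z of B that it has never visited before and
   still has a step to make, one of the 2d steps (z has a neighbour outside A)
   is forbidden.  This happens for all points of B except possibly the last
   one discovered, so the probability that R(n) = A is at most c^(|B|-1).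
   Hence -log2 p(R(n)) >= -log2 c * (|∂R(n)| - 1) pointwise, and averaging
   over the (2d)^n equally likely paths gives the theorem. *)

Lemma inb_In (x : point) (l : list point) : inb x l = true <-> In x l.
Proof.
  unfold inb; rewrite existsb_exists; split.
  - intros [y [Hy Hb]]; destruct (list_eq_dec Z.eq_dec x y); [subst; auto | discriminate].
  - intros H; exists x; split; auto; destruct (list_eq_dec Z.eq_dec x x); tauto.
Qed.

Lemma inb_false (x : point) (l : list point) : inb x l = false <-> ~ In x l.
Proof. rewrite <- inb_In; destruct (inb x l); split; congruence. Qed.

Lemma inb_middle (z x : point) (V W : list point) :
  inb z (V ++ x :: W) = inb z (x :: V ++ W).
Proof.
  unfold inb; cbn [existsb]; rewrite !existsb_app; cbn [existsb].
  destruct (list_eq_dec Z.eq_dec z x), (existsb _ V), (existsb _ W); reflexivity.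
Qed.

Definition all_in (L l : list point) : bool := forallb (fun z => inb z l) L.

Lemma all_in_ext (L l l' : list point) :
  (forall z, inb z l = inb z l') -> all_in L l = all_in L l'.
Proof.
  intros H; unfold all_in; induction L as [|a L IH]; cbn; [| rewrite H, IH]; reflexivity.
Qed.

Lemma length_filter_none {T} (f : T -> bool) (l : list T) :
  (forall a, f a = false) -> length (filter f l) = 0%nat.
Proof. intros H; induction l as [|a l IH]; cbn; [|rewrite H]; auto. Qed.

Lemma length_filter_mono {T} (f g : T -> bool) (l : list T) :
  (forall a, f a = true -> g a = true) -> (length (filter f l) <= length (filter g l))%nat.
Proof.
  intros H; induction l as [|a l IH]; cbn; auto.
  destruct (f a) eqn:E; [rewrite (H a E); cbn; lia | destruct (g a); cbn; lia].
Qed.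

Lemma count_cons_family {T} (P : list T -> bool) (S : list T) (L : list (list T)) :
  length (filter P (flat_map (fun p => map (fun s => s :: p) S) L)) =
  list_sum (map (fun s => length (filter (fun p => P (s :: p)) L)) S).
Proof.
  induction L as [|p L IH]; cbn.
  - induction S; cbn; auto.
  - rewrite filter_app, length_app, IH; clear IH.
    induction S as [|s S IHS]; cbn; auto.
    unfold list_sum in *; destruct (P (s :: p)); cbn [length]; lia.
Qed.

Lemma count_paths_S (d m : nat) (P : list step -> bool) :
  length (filter P (paths d (S m))) =
  list_sum (map (fun s => length (filter (fun p => P (s :: p)) (paths d m))) (steps d)).
Proof. apply count_cons_family. Qed.

Lemma length_steps (d : nat) : length (steps d) = (d * 2)%nat.
Proof. unfold steps; etransitivity; [apply length_prod | rewrite length_seq; reflexivity]. Qed.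

Lemma length_paths (d n : nat) : length (paths d n) = ((d * 2) ^ n)%nat.
Proof.
  induction n as [|n IH]; cbn [paths]; auto.
  rewrite flat_map_constant_length with (c := length (steps d)) by (intros; apply length_map).
  rewrite IH, length_steps; cbn; lia.
Qed.

Lemma npaths_pow (d n : nat) : npaths d n = (2 * INR d) ^ n.
Proof. unfold npaths; rewrite length_paths, pow_INR, mult_INR; f_equal; cbn; ring. Qed.

Lemma INR_list_sum {T} (f : T -> nat) (l : list T) :
  INR (list_sum (map f l)) = rsum (fun x => INR (f x)) l.
Proof.
  unfold rsum, list_sum; induction l as [|a l IH]; cbn [map fold_right]; [reflexivity |].
  rewrite plus_INR, IH; reflexivity.
Qed.

Lemma rsum_le {T} (f g : T -> R) (l : list T) :
  (forall s, In s l -> f s <= g s) -> rsum f l <= rsum g l.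
Proof.
  unfold rsum; induction l as [|a l IH]; intros H; cbn; [lra|].
  apply Rplus_le_compat; [apply H; left | apply IH; intros; apply H; right]; auto.
Qed.

Lemma rsum_const {T} (M : R) (l : list T) : rsum (fun _ => M) l = INR (length l) * M.
Proof.
  unfold rsum; induction l as [|a l IH]; cbn [map fold_right length]; [cbn; ring |].
  rewrite IH, S_INR; ring.
Qed.

Lemma rsum_scal {T} (f : T -> R) (k : R) (l : list T) :
  rsum (fun x => k * f x) l = k * rsum f l.
Proof. unfold rsum; induction l; cbn; [ring | rewrite IHl; ring]. Qed.

Lemma rsum_le_but_one {T} (f : T -> R) (M : R) (l : list T) :
  (forall s, In s l -> 0 <= f s <= M) -> (exists s, In s l /\ f s = 0) ->
  rsum f l <= (INR (length l) - 1) * M.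
Proof.
  induction l as [|a l IH]; intros H [s [Hs Hf]]; [destruct Hs|].
  assert (Htail : rsum f l <= INR (length l) * M).
  { rewrite <- rsum_const; apply rsum_le; intros; apply H; right; auto. }
  unfold rsum in *; cbn [map fold_right length]; rewrite S_INR.
  destruct Hs as [<- | Hs].
  - lra.
  - assert (fold_right Rplus 0 (map f l) <= (INR (length l) - 1) * M)
      by (apply IH; [intros; apply H; right | exists s]; auto).
    specialize (H a (or_introl eq_refl)); lra.
Qed.

Definition unvisited (B V : list point) : nat :=
  length (filter (fun z => negb (inb z V)) B).

Lemma unvisited_cons (B V : list point) (x : point) : NoDup B ->
  (unvisited B (x :: V) + Nat.b2n (inb x B && negb (inb x V)) = unvisited B V)%nat.
Proof.
  unfold unvisited; induction B as [|a B IH]; intros HN; [reflexivity|].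
  apply NoDup_cons_iff in HN as [HaB HN]; specialize (IH HN).
  cbn [filter].
  change (inb a (x :: V)) with ((if list_eq_dec Z.eq_dec a x then true else false) || inb a V).
  change (inb x (a :: B)) with ((if list_eq_dec Z.eq_dec x a then true else false) || inb x B).
  destruct (list_eq_dec Z.eq_dec a x) as [<- | Hne]; cbn [orb negb].
  - rewrite (proj2 (inb_false a B) HaB) in IH.
    destruct (list_eq_dec Z.eq_dec a a); [|congruence].
    destruct (inb a V); cbn [andb orb negb Nat.b2n length] in *; lia.
  - destruct (list_eq_dec Z.eq_dec x a); [congruence|]; cbn [orb].
    destruct (inb a V); cbn [negb length]; lia.
Qed.

Lemma unvisited_nil (B : list point) : unvisited B [] = length B.
Proof. unfold unvisited; induction B as [|a B IH]; cbn; auto. Qed.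

Lemma unvisited_covered (B V : list point) : all_in B V = true -> unvisited B V = 0%nat.
Proof.
  unfold all_in, unvisited; induction B as [|a B IH]; cbn; auto.
  intros H; apply andb_prop in H as [-> H]; auto.
Qed.

Lemma unvisited_last (B V : list point) (x : point) :
  NoDup B -> all_in B (V ++ [x]) = true -> (unvisited B V <= 1)%nat.
Proof.
  intros HN Hcov.
  rewrite (all_in_ext B (V ++ [x]) (x :: V)) in Hcov
    by (intros z; rewrite inb_middle, app_nil_r; reflexivity).
  rewrite <- (unvisited_cons B V x HN), unvisited_covered by exact Hcov.
  destruct (_ && _); cbn; lia.
Qed.

Definition cover_count (d : nat) (A B V : list point) (x : point) (n : nat) : nat :=
  length (filter (fun p => all_in (walk_pts x p) A && all_in B (V ++ walk_pts x p))
                 (paths d n)).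

Lemma cover_count_0 (d : nat) (A B V : list point) (x : point) :
  cover_count d A B V x 0 = if inb x A && all_in B (V ++ [x]) then 1%nat else 0%nat.
Proof. unfold cover_count; cbn; rewrite Bool.andb_true_r; destruct (_ && _); reflexivity. Qed.

Lemma cover_count_S (d : nat) (A B V : list point) (x : point) (m : nat) :
  cover_count d A B V x (S m) =
  if inb x A
  then list_sum (map (fun s => cover_count d A B (x :: V) (move x s) m) (steps d))
  else 0%nat.
Proof.
  unfold cover_count; rewrite count_paths_S; cbn [walk_pts].
  destruct (inb x A) eqn:HxA.
  - f_equal; apply map_ext; intros s; f_equal; apply filter_ext; intros p.
    unfold all_in at 1; cbn [forallb]; rewrite HxA; cbn [andb]; f_equal.
    apply all_in_ext; intros z; apply inb_middle.
  - induction (steps d) as [|s l IH]; cbn; auto.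
    rewrite length_filter_none; auto.
    intros p; unfold all_in at 1; cbn [forallb]; rewrite HxA; reflexivity.
Qed.

Lemma cover_count_outside (d : nat) (A B V : list point) (y : point) (m : nat) :
  inb y A = false -> cover_count d A B V y m = 0%nat.
Proof.
  intros HyA; destruct m; [rewrite cover_count_0 | rewrite cover_count_S]; rewrite HyA; auto.
Qed.

(* The probability of not leaving through a prescribed one of the 2d steps. *)
Definition stay_factor (d : nat) : R := 1 - / (2 * INR d).

Lemma stay_factor_bounds (d : nat) : (1 <= d)%nat -> / 2 <= stay_factor d <= 1.
Proof.
  intros hd; apply (le_INR 1) in hd; cbn in hd; unfold stay_factor.
  assert (/ (2 * INR d) <= / 2) by (apply Rinv_le_contravar; lra).
  assert (0 < / (2 * INR d)) by (apply Rinv_0_lt_compat; lra).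
  lra.
Qed.

Lemma one_le_pow_div (c : R) (k : nat) : 0 < c -> c <= 1 -> (k <= 1)%nat -> 1 <= c ^ k / c.
Proof.
  intros Hc0 Hc1 Hk; destruct k as [|[|k]]; [| | lia]; cbn.
  - unfold Rdiv; rewrite Rmult_1_l, <- Rinv_1; apply Rinv_le_contravar; lra.
  - right; field; lra.
Qed.

Lemma cover_count_bound (d : nat) (A B : list point) : (1 <= d)%nat -> NoDup B ->
  (forall z, In z B -> exists s, In s (steps d) /\ inb (move z s) A = false) ->
  forall n V x, INR (cover_count d A B V x n) <=
    (2 * INR d) ^ n * stay_factor d ^ unvisited B V / stay_factor d.
Proof.
  intros hd HN Hexit.
  set (c := stay_factor d); pose proof (stay_factor_bounds d hd) as Hc; fold c in Hc.
  assert (Hd : 1 <= INR d) by (apply (le_INR 1); auto).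
  assert (Hbound_nonneg : forall n k, 0 <= (2 * INR d) ^ n * c ^ k / c).
  { intros n k; apply Rmult_le_pos; [apply Rmult_le_pos; apply pow_le; lra |].
    left; apply Rinv_0_lt_compat; lra. }
  induction n as [|m IH]; intros V x.
  - rewrite cover_count_0; destruct (inb x A && all_in B (V ++ [x])) eqn:Hcov;
      [| apply Hbound_nonneg].
    apply andb_prop in Hcov as [_ Hcov].
    pose proof (unvisited_last B V x HN Hcov).
    rewrite pow_O, Rmult_1_l; apply one_le_pow_div; [lra | apply Hc | assumption].
  - rewrite cover_count_S; destruct (inb x A); [| apply Hbound_nonneg].
    rewrite INR_list_sum.
    set (M := (2 * INR d) ^ m * c ^ unvisited B (x :: V) / c).
    assert (Hterm : forall s, In s (steps d) ->
                    0 <= INR (cover_count d A B (x :: V) (move x s) m) <= M)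
      by (split; [apply pos_INR | apply IH]).
    assert (H2d : INR (length (steps d)) = 2 * INR d)
      by (rewrite length_steps, mult_INR; cbn; ring).
    pose proof (unvisited_cons B V x HN) as Hcons.
    destruct (inb x B && negb (inb x V)) eqn:Hnew; cbn [Nat.b2n] in Hcons.
    + (* [x] is a newly discovered boundary point: one step out of 2d is fatal *)
      apply andb_prop in Hnew as [HxB _]; apply inb_In in HxB.
      destruct (Hexit x HxB) as [s0 [Hs0 Hout]].
      eapply Rle_trans; [apply (rsum_le_but_one _ M); [exact Hterm |] |].
      * exists s0; split; [exact Hs0 |].
        rewrite cover_count_outside by exact Hout; reflexivity.
      * rewrite H2d, <- Hcons, Nat.add_1_r; unfold M; cbn [pow].
        right; unfold c, stay_factor; field; lra.
    + eapply Rle_trans; [apply (rsum_le _ (fun _ => M)); apply Hterm |].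
      rewrite rsum_const, H2d, <- Hcons, Nat.add_0_r; unfold M; cbn [pow].
      right; field; lra.
Qed.

Definition boundary_pts (d : nat) (A : list point) : list point :=
  filter (fun z => existsb (fun s => negb (inb (move z s) A)) (steps d))
         (nodup (list_eq_dec Z.eq_dec) A).

Lemma boundary_pts_exit (d : nat) (A : list point) (z : point) :
  In z (boundary_pts d A) -> exists s, In s (steps d) /\ inb (move z s) A = false.
Proof.
  intros Hz; apply filter_In in Hz as [_ Hz]; apply existsb_exists in Hz as [s [Hs Hout]].
  exists s; split; [exact Hs | destruct (inb (move z s) A); auto; discriminate].
Qed.

(* p(R(n) = range of p) <= c^|∂R| / c, and it is positive since [p] itself counts. *)
Lemma prob_range_bound (d n : nat) (p : list step) : (1 <= d)%nat -> In p (paths d n) ->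
  0 < prob_range d n p <=
  stay_factor d ^ boundary_size d (range d p) / stay_factor d.
Proof.
  intros hd Hp.
  set (A := range d p); set (B := boundary_pts d A).
  set (same := filter (fun q => same_set (range d q) A) (paths d n)).
  assert (HNp : 0 < npaths d n)
    by (rewrite npaths_pow; apply pow_lt; apply (le_INR 1) in hd; cbn in hd; lra).
  assert (Hself : In p same).
  { apply filter_In; split; [exact Hp |].
    assert (Hrefl : forallb (fun x => inb x A) A = true)
      by (apply forallb_forall; intros; apply inb_In; auto).
    unfold same_set; fold A; rewrite Hrefl; reflexivity. }
  assert (Hsame_cover : (length same <= cover_count d A B [] (origin d) n)%nat).
  { apply length_filter_mono; intros q Hq; apply andb_prop in Hq as [Hq HAq].
    unfold all_in; change (walk_pts (origin d) q) with (range d q); cbn [app].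
    rewrite Hq; cbn [andb].
    apply forallb_forall; intros z Hz; apply (proj1 (forallb_forall _ _) HAq).
    apply filter_In in Hz as [Hz _]; apply nodup_In in Hz; exact Hz. }
  assert (Hcount := cover_count_bound d A B hd (NoDup_filter _ (NoDup_nodup _ _))
                      (boundary_pts_exit d A) n [] (origin d)).
  rewrite unvisited_nil in Hcount.
  unfold prob_range; fold A same; split.
  - apply Rdiv_lt_0_compat; [apply lt_0_INR; destruct same; [destruct Hself | cbn; lia] | exact HNp].
  - apply le_INR in Hsame_cover; change (length B) with (boundary_size d A) in Hcount.
    rewrite npaths_pow in HNp |- *.
    apply Rmult_le_reg_r with ((2 * INR d) ^ n); [exact HNp |].
    unfold Rdiv at 1; rewrite Rmult_assoc, Rinv_l, Rmult_1_r by lra.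
    rewrite Rmult_comm; unfold Rdiv in *; rewrite <- Rmult_assoc; lra.
Qed.

Lemma neg_log2_lower_bound (c pr : R) (b : nat) :
  0 < c -> 0 < pr -> pr <= c ^ b / c -> - log2 c * (INR b - 1) <= - log2 pr.
Proof.
  intros Hc Hpr Hle.
  assert (Hln2 : 0 < ln 2) by (pose proof ln_lt_2; lra).
  assert (Hpow : ln (c ^ b / c) = (INR b - 1) * ln c).
  { unfold Rdiv; rewrite ln_mult, ln_Rinv, ln_pow by (try apply pow_lt; try apply Rinv_0_lt_compat; lra).
    ring. }
  assert (Hln : ln pr <= (INR b - 1) * ln c).
  { rewrite <- Hpow; destruct Hle as [Hlt | ->]; [left; apply ln_increasing | right]; auto. }
  unfold log2, Rdiv.
  replace (- (ln c * / ln 2) * (INR b - 1)) with (- ((INR b - 1) * ln c * / ln 2)) by ring.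
  apply Ropp_le_contravar, Rmult_le_compat_r; [left; apply Rinv_0_lt_compat |]; lra.
Qed.

Theorem mainTheorem3 (d n : nat) (hd : (1 <= d)%nat) :
  range_entropy d n >= - log2 (1 - / (2 * INR d)) * exp_boundary_minus1 d n.
Proof.
  assert (Hweight : 0 <= / npaths d n).
  { left; apply Rinv_0_lt_compat; rewrite npaths_pow.
    apply pow_lt; apply (le_INR 1) in hd; cbn in hd; lra. }
  assert (Hc : 0 < stay_factor d) by (pose proof (stay_factor_bounds d hd); lra).
  unfold range_entropy, exp_boundary_minus1; rewrite <- rsum_scal.
  apply Rle_ge, rsum_le; intros p Hp.
  destruct (prob_range_bound d n p hd Hp) as [Hpos Hle].
  pose proof (neg_log2_lower_bound _ _ _ Hc Hpos Hle) as Hbits.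
  unfold stay_factor in Hbits.
  rewrite Rmult_comm, Rmult_assoc; apply Rmult_le_compat_l; [exact Hweight |].
  rewrite Rmult_comm; exact Hbits.
Qed.
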